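(* Let $\mathbb{K}$ be a valued field, $E$, $F$, $H$ topological $\mathbb{K}$-vector spaces, $U\subseteq E$ and $V\subseteq F$ subsets with dense interior, $k\in\mathbb{N}_0$, $\sigma\in\,]0,1]$, $\tau>0$, $f\colon U\to V$ a $C^{k,\sigma}_{BGN}$-map (as a map into $F$) and $g\colon V\to H$ a $C^{k,\tau}_{BGN}$-map. Then $g\circ f\colon U\to H$ is $C^{k,\sigma\cdot\tau}_{BGN}$.
   Context: Valued field: field with absolute value defining a non-discrete topology; vector spaces Hausdorff. $C^k_{BGN}$: for $W\subseteq E$ with dense interior, $W^{[1]}=\{(x,y,t)\in W\times E\times\mathbb{K}:x+ty\in W\}$, $W^{]1[}$ its subset with $t\ne0$, $g^{]1[}(x,y,t)=(g(x+ty)-g(x))/t$; $g$ is $C^0_{BGN}$ if continuous, $C^1_{BGN}$ if continuous and $g^{]1[}$ extends continuously to $g^{[1]}$ on $W^{[1]}$, $C^k_{BGN}$ if $C^1_{BGN}$ with $g^{[1]}$ $C^{k-1}_{BGN}$; $g^{[k]}=(g^{[1]})^{[k-1]}$, $g^{[0]}=g$. Gauge: $q\colon E\to[0,\infty[$ with $q(tx)=|t|q(x)$ and each $\{q<r\}$ a $0$-neighbourhood. $g\colon W\to F$ is $C^{0,\sigma}$ if for every $x_0\in W$ and gauge $q$ on $F$ there exist a gauge $p$ on $E$ and a neighbourhood $W_0$ of $x_0$ in $W$ with $q(g(y)-g(x))\le p(y-x)^\sigma$ for $x,y\in W_0$. $C^{k,\sigma}_{BGN}$: $C^k_{BGN}$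 and each $g^{[j]}$, $j\le k$, is $C^{0,\sigma}$. *)

From mathcomp Require Import all_boot all_order all_algebra.
From mathcomp Require Import classical_sets reals exp.
Set Implicit Arguments. Unset Strict Implicit. Unset Printing Implicit Defensive.
Import Order.TTheory GRing.Theory Num.Theory.
Local Open Scope classical_set_scope.
Local Open Scope ring_scope.

Section BGN.
Variables (R : realType) (K : fieldType) (abs : K -> R).

Definition is_absval : Prop :=
  [/\ forall x, abs x = 0 <-> x = 0,
      forall x, 0 <= abs x,
      forall x y, abs (x * y) = abs x * abs y &
      forall x y, abs (x + y) <= abs x + abs y].

Definition openK : set (set K^o) :=
  fun O => forall x, O x -> exists2 r : R, 0 < r & forall y, abs (y - x) < r -> O y.

Definition nondiscrete : Prop := ~ openK [set 0].

Definition is_topology {T : Type} (op : set (set T)) : Prop :=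
  [/\ op setT,
      forall A B, op A -> op B -> op (A `&` B) &
      forall (I : Type) (G : I -> set T), (forall i, op (G i)) -> op (\bigcup_i G i)].

Definition hausdorff {T : Type} (op : set (set T)) : Prop :=
  forall x y : T, x <> y -> exists U, exists V,
    [/\ op U, op V, U x, V y & U `&` V = set0].

Definition prod_open {A B : Type} (opA : set (set A)) (opB : set (set B))
  : set (set (A * B)) :=
  fun O => forall z, O z -> exists U, exists V,
    [/\ opA U, opB V, U z.1, V z.2 & forall a b, U a -> V b -> O (a, b)].

Definition continuous_on {A B : Type} (opA : set (set A)) (opB : set (set B))
  (W : set A) (f : A -> B) : Prop :=
  forall x, W x -> forall O, opB O -> O (f x) ->
    exists2 U, opA U /\ U x & forall y, W y -> U y -> O (f y).

Definition interior_of {T : Type} (op : set (set T)) (W : set T) : set T :=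
  fun x => exists2 U, op U /\ U x & U `<=` W.

Definition dense_interior {T : Type} (op : set (set T)) (W : set T) : Prop :=
  forall x, W x -> forall O, op O -> O x -> exists y, O y /\ interior_of op W y.

Definition is_tvs (E : lmodType K) (op : set (set E)) : Prop :=
  [/\ is_topology op,
      continuous_on (prod_open op op) op setT (fun z => z.1 + z.2),
      continuous_on (prod_open openK op) op setT (fun z => z.1 *: z.2) &
      hausdorff op].

Definition is_gauge (E : lmodType K) (op : set (set E)) (q : E -> R) : Prop :=
  [/\ forall x, 0 <= q x,
      forall (t : K) x, q (t *: x) = abs t * q x &
      forall r : R, 0 < r -> exists2 U, op U /\ U 0 & U `<=` [set x | q x < r]].

Definition C0holder (s : R) (E F : lmodType K) (opE : set (set E))
  (opF : set (set F)) (W : set E) (g : E -> F) : Prop :=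
  forall x0, W x0 -> forall q, is_gauge opF q ->
    exists p, is_gauge opE p /\
    exists2 U, opE U /\ U x0 &
      forall x y, W x -> U x -> W y -> U y -> q (g y - g x) <= p (y - x) `^ s.

Definition W1 (E : lmodType K) (W : set E) : set (E * E * K^o) :=
  fun z => W z.1.1 /\ W (z.1.1 + z.2 *: z.1.2).

Definition W1open (E : lmodType K) (W : set E) : set (E * E * K^o) :=
  fun z => W1 W z /\ z.2 <> 0.

Definition diffquot (E F : lmodType K) (g : E -> F) (z : E * E * K^o) : F :=
  z.2^-1 *: (g (z.1.1 + z.2 *: z.1.2) - g z.1.1).

Definition topE1 (E : lmodType K) (op : set (set E)) : set (set (E * E * K^o)) :=
  prod_open (prod_open op op) openK.

(** C^{k,s}_{BGN}: g is C^k_BGN and every g^{[j]} (j <= k) is C^{0,s}.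
    g^{[1]} is (the, unique by density and Hausdorffness) continuous
    extension of g^{]1[} to W^{[1]}. *)
Fixpoint CkHolder (s : R) (k : nat) : forall (E F : lmodType K)
  (opE : set (set E)) (opF : set (set F)) (W : set E) (g : E -> F), Prop :=
  match k with
  | 0 => fun E F opE opF W g =>
      continuous_on opE opF W g /\ C0holder s opE opF W g
  | k'.+1 => fun E F opE opF W g =>
      [/\ continuous_on opE opF W g, C0holder s opE opF W g &
        exists g1 : E * E * K^o -> F,
          [/\ continuous_on (topE1 opE) opF (W1 W) g1,
              forall z, W1open W z -> g1 z = diffquot g z &
              CkHolder s k' (topE1 opE) opF (W1 W) g1]]
  end.

End BGN.

From mathcomp Require Import all_boot all_order all_algebra.
From mathcomp Require Import classical_sets reals exp boolp.
From mathcomp Require Import ring lra.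
Set Implicit Arguments. Unset Strict Implicit. Unset Printing Implicit Defensive.
Import Order.TTheory GRing.Theory Num.Theory.
Local Open Scope classical_set_scope.
Local Open Scope ring_scope.

(* At level 0 the Hölder exponents multiply:
   q (g (f y) - g (f x)) <= p (f y - f x) ^ tau <= p' (y - x) ^ (sigma * tau).
   For the step, (g \o f)^{[1]} = g^{[1]} \o h with h (x, y, t) = (f x, f^{[1]} (x, y, t), t),
   so it suffices that h is C^{k,sigma} to apply the induction hypothesis to g^{[1]} \o h.
   The components of h are f \o pr_1 (induction hypothesis again: the continuous linear
   map pr_1 is C^{k,1}), f^{[1]}, and pr_3, which is C^{k,1} and thus C^{k,sigma} since
   sigma <= 1.  Pairs of C^{k,sigma} maps are C^{k,sigma} because every gauge on a product
   is dominated by the maximum of two gauges on the factors, rescaled Minkowski functionals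
   of a product neighbourhood of 0. *)

Section AbsoluteValue.
Variables (R : realType) (K : fieldType) (abs : K -> R).
Hypothesis Habs : is_absval abs.

Lemma abs_eq0 x : abs x = 0 <-> x = 0.
Proof. by case: Habs. Qed.

Lemma abs_ge0 x : 0 <= abs x.
Proof. by case: Habs. Qed.

Lemma absM x y : abs (x * y) = abs x * abs y.
Proof. by case: Habs. Qed.

Lemma ler_absD x y : abs (x + y) <= abs x + abs y.
Proof. by case: Habs. Qed.

Lemma abs0 : abs 0 = 0.
Proof. exact/abs_eq0. Qed.

Lemma abs_gt0 x : x != 0 -> 0 < abs x.
Proof.
by move=> x0; rewrite lt_neqAle abs_ge0 andbT eq_sym; apply: contra_neq x0 => /abs_eq0.
Qed.

Lemma abs1 : abs 1 = 1.
Proof.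
have a10 : abs 1 != 0 by rewrite gt_eqF // abs_gt0 ?oner_neq0.
by apply: (mulfI a10); rewrite -absM !mulr1.
Qed.

Lemma absV x : abs x^-1 = (abs x)^-1.
Proof.
have [->|x0] := eqVneq x 0; first by rewrite invr0 abs0 invr0.
have ax0 : abs x != 0 by rewrite gt_eqF // abs_gt0.
by apply: (mulfI ax0); rewrite -absM !mulfV // abs1.
Qed.

Lemma absX x n : abs (x ^+ n) = abs x ^+ n.
Proof. by elim: n => [|n IH]; rewrite ?abs1 // !exprS absM IH. Qed.

Lemma openK_ball (a : K) (r : R) : openK abs [set y : K^o | abs (y - a) < r].
Proof.
move=> y /= ya; exists (r - abs (y - a)); first by rewrite subr_gt0.
move=> z zy; have := ler_absD (z - y) (y - a); rewrite addrA subrK => za.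
by apply: le_lt_trans za _; rewrite -ltrBrDr.
Qed.

Lemma openK_setT : openK abs setT.
Proof. by move=> x _; exists 1. Qed.

Lemma openK_setI (X Y : set K^o) : openK abs X -> openK abs Y -> openK abs (X `&` Y).
Proof.
move=> oX oY x [Xx Yx]; have [r1 r10 H1] := oX x Xx; have [r2 r20 H2] := oY x Yx.
exists (Num.min r1 r2); first by rewrite lt_min r10 r20.
by move=> y; rewrite lt_min => /andP[y1 y2]; split; [apply: H1 | apply: H2].
Qed.

Hypothesis Hnd : nondiscrete abs.

Lemma exists_small_abs (r : R) : 0 < r -> exists2 y : K, y != 0 & abs y < r.
Proof.
move=> r0; apply: contrapT => small; apply: Hnd => x /= ->.
exists r => // y; rewrite subr0 => yr; apply: contrapT => /eqP y0.
by apply: small; exists y.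
Qed.

End AbsoluteValue.

Section ProductTopology.
Variables (A B C : Type) (opA : set (set A)) (opB : set (set B)) (opC : set (set C)).

Lemma prod_open_rect (UA : set A) (UB : set B) :
  opA UA -> opB UB -> prod_open opA opB [set z | UA z.1 /\ UB z.2].
Proof. by move=> oA oB z [? ?]; exists UA, UB; split. Qed.

Lemma prod_open_setT : opA setT -> opB setT -> prod_open opA opB setT.
Proof. by move=> oA oB z _; exists setT, setT; split. Qed.

Lemma prod_open_setI :
  (forall X Y, opA X -> opA Y -> opA (X `&` Y)) ->
  (forall X Y, opB X -> opB Y -> opB (X `&` Y)) ->
  forall X Y, prod_open opA opB X -> prod_open opA opB Y -> prod_open opA opB (X `&` Y).
Proof.
move=> hA hB X Y oX oY z [Xz Yz].
have [U1 [V1 [oU1 oV1 U1z V1z H1]]] := oX z Xz.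
have [U2 [V2 [oU2 oV2 U2z V2z H2]]] := oY z Yz.
exists (U1 `&` U2), (V1 `&` V2); split; [exact: hA | exact: hB | by [] | by [] |].
by move=> a b [? ?] [? ?]; split; [apply: H1 | apply: H2].
Qed.

Lemma continuous2_rect (f : A * B -> C) a b O :
  continuous_on (prod_open opA opB) opC setT f -> opC O -> O (f (a, b)) ->
  exists UA UB, [/\ opA UA, opB UB, UA a, UB b &
    forall a' b', UA a' -> UB b' -> O (f (a', b'))].
Proof.
move=> cf oO Of; have [W [oW Wab] fW] := cf (a, b) I O oO Of.
have [UA [UB [oA oB UAa UBb sW]]] := oW (a, b) Wab.
by exists UA, UB; split => // a' b' ? ?; apply: fW; last apply: sW.
Qed.

Lemma continuous_on_sub (W : set A) (f : A -> B) :
  continuous_on opA opB setT f -> continuous_on opA opB W f.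
Proof.
move=> cf x _ O oO Ox; have [U oU fU] := cf x I O oO Ox.
by exists U => // y _; apply: fU.
Qed.

Lemma continuous_fst : opB setT -> continuous_on (prod_open opA opB) opA setT fst.
Proof.
move=> oT x _ O oO Ox; exists [set z | O z.1]; last by [].
by split => // z Oz; exists O, setT; split.
Qed.

Lemma continuous_snd : opA setT -> continuous_on (prod_open opA opB) opB setT snd.
Proof.
move=> oT x _ O oO Ox; exists [set z | O z.2]; last by [].
by split => // z Oz; exists setT, O; split.
Qed.

Lemma continuous_on_comp (U : set A) (V : set B) (f : A -> B) (g : B -> C) :
  continuous_on opA opB U f -> (forall x, U x -> V (f x)) ->
  continuous_on opB opC V g -> continuous_on opA opC U (g \o f).
Proof.
move=> cf fUV cg x Ux O oO Ox; have [W [oW Wfx] gW] := cg (f x) (fUV x Ux) O oO Ox.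
have [U' [oU' U'x] fU'] := cf x Ux W oW Wfx.
by exists U' => // y Uy U'y; apply: gW; [apply: fUV | apply: fU'].
Qed.

Lemma continuous_on_pair (W : set A) (f : A -> B) (g : A -> C) :
  (forall X Y, opA X -> opA Y -> opA (X `&` Y)) ->
  continuous_on opA opB W f -> continuous_on opA opC W g ->
  continuous_on opA (prod_open opB opC) W (fun x => (f x, g x)).
Proof.
move=> hI cf cg x Wx O oO Ox; have [O1 [O2 [o1 o2 O1x O2x sO]]] := oO _ Ox.
have [U1 [oU1 U1x] fU1] := cf x Wx O1 o1 O1x.
have [U2 [oU2 U2x] gU2] := cg x Wx O2 o2 O2x.
exists (U1 `&` U2); first by split => //; apply: hI.
by move=> y Wy [U1y U2y]; apply: sO; [apply: fU1 | apply: gU2].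
Qed.

End ProductTopology.

Section PreTVS.
Variables (R : realType) (K : fieldType) (abs : K -> R).
Hypothesis Habs : is_absval abs.

(* The part of [is_tvs] that the argument uses; unlike [is_tvs], it is readily
   inherited by the product topologies [prod_open] and [topE1]. *)
Definition is_pretvs (E : lmodType K) (op : set (set E)) : Prop :=
  [/\ op setT, (forall A B, op A -> op B -> op (A `&` B)),
      continuous_on (prod_open op op) op setT (fun z => z.1 + z.2) &
      continuous_on (prod_open (openK abs) op) op setT (fun z => z.1 *: z.2)].

Lemma is_tvs_pretvs (E : lmodType K) (op : set (set E)) : is_tvs abs op -> is_pretvs op.
Proof. by case=> -[? ? _] ? ? _; split. Qed.

Lemma openK_rect (a b : K) (r : R) :
  prod_open (openK abs) (openK abs) [set z : K^o * K^o | abs (z.1 - a) < r /\ abs (z.2 - b) < r].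
Proof.
exact: prod_open_rect (openK_ball Habs (a := a) (r := r)) (openK_ball Habs (a := b) (r := r)).
Qed.

Lemma continuous_addK :
  continuous_on (prod_open (openK abs) (openK abs)) (openK abs) setT
    (fun z : K^o * K^o => z.1 + z.2).
Proof.
move=> [a b] _ O oO /= Oab; have [r r0 Br] := oO _ Oab.
exists [set z : K^o * K^o | abs (z.1 - a) < r / 2 /\ abs (z.2 - b) < r / 2].
  by split; [exact: openK_rect | rewrite /= !subrr abs0 ?divr_gt0].
move=> [a' b'] _ /= [a'a b'b]; apply: Br.
rewrite opprD addrACA; apply: le_lt_trans (ler_absD Habs _ _) _.
by rewrite [r]splitr ltrD.
Qed.

Lemma continuous_mulK :
  continuous_on (prod_open (openK abs) (openK abs)) (openK abs) setT
    (fun z : K^o * K^o => z.1 * z.2).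
Proof.
move=> [t0 y0] _ O oO /= Oty; have [r r0 Br] := oO _ Oty.
pose M := abs t0 + abs y0 + 1.
have M0 : 0 < M by rewrite ltr_wpDl // addr_ge0 // abs_ge0.
pose d := r / (M + r).
have Mr0 : 0 < M + r by rewrite addr_gt0.
have d0 : 0 < d by rewrite divr_gt0.
have d1 : d < 1 by rewrite ltr_pdivrMr // mul1r ltrDr.
have dM : d * M <= r by rewrite mulrAC ler_pdivrMr // ler_pM2l // lerDl ltW.
exists [set z : K^o * K^o | abs (z.1 - t0) < d /\ abs (z.2 - y0) < d].
  by split; [exact: openK_rect | rewrite /= !subrr abs0].
move=> [t y] _ /= [tt0 yy0]; apply: Br.
have -> : t * y - t0 * y0 = t * (y - y0) + (t - t0) * y0 by ring.
apply: le_lt_trans (ler_absD Habs _ _) _; rewrite !(absM Habs).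
have at_le : abs t <= abs t0 + abs (t - t0) by rewrite -[t in abs t](subrK t0) addrC ler_absD.
have := abs_ge0 Habs (y - y0); have := abs_ge0 Habs (t - t0).
have := abs_ge0 Habs t0; have := abs_ge0 Habs y0; have := abs_ge0 Habs t.
rewrite /M in dM; nra.
Qed.

Lemma pretvs_field : is_pretvs (openK abs : set (set K^o)).
Proof.
split; [exact: openK_setT | exact: openK_setI | exact: continuous_addK | exact: continuous_mulK].
Qed.

Lemma pretvs_prod (E1 E2 : lmodType K) (op1 : set (set E1)) (op2 : set (set E2)) :
  is_pretvs op1 -> is_pretvs op2 -> is_pretvs (prod_open op1 op2 : set (set (E1 * E2)%type)).
Proof.
move=> [hT1 hI1 ha1 hs1] [hT2 hI2 ha2 hs2]; split.
- exact: prod_open_setT.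
- exact: prod_open_setI.
- move=> [[x1 x2] [y1 y2]] _ O oO /= Oxy.
  have [O1 [O2 [oO1 oO2 O1x O2x sO]]] := oO _ Oxy.
  have [A1 [B1 [oA1 oB1 A1x B1y H1]]] := continuous2_rect ha1 oO1 O1x.
  have [A2 [B2 [oA2 oB2 A2x B2y H2]]] := continuous2_rect ha2 oO2 O2x.
  exists [set z : (E1 * E2) * (E1 * E2) | (A1 z.1.1 /\ A2 z.1.2) /\ (B1 z.2.1 /\ B2 z.2.2)].
    split => // z [[? ?] [? ?]].
    exists [set w | A1 w.1 /\ A2 w.2], [set w | B1 w.1 /\ B2 w.2].
    by split => //; apply: prod_open_rect.
  move=> [[a1 a2] [b1 b2]] _ /= [[? ?] [? ?]].
  by apply: (sO (a1 + b1) (a2 + b2)); [apply: H1 | apply: H2].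
- move=> [t [x1 x2]] _ O oO /= Oxy.
  have [O1 [O2 [oO1 oO2 O1x O2x sO]]] := oO _ Oxy.
  have [T1 [A1 [oT1 oA1 T1t A1x H1]]] := continuous2_rect hs1 oO1 O1x.
  have [T2 [A2 [oT2 oA2 T2t A2x H2]]] := continuous2_rect hs2 oO2 O2x.
  exists [set z : K^o * (E1 * E2) | (T1 z.1 /\ T2 z.1) /\ (A1 z.2.1 /\ A2 z.2.2)].
    split => // z [[? ?] [? ?]].
    exists (T1 `&` T2), [set w | A1 w.1 /\ A2 w.2].
    by split => //; [apply: openK_setI | apply: prod_open_rect].
  move=> [s [a1 a2]] _ /= [[? ?] [? ?]].
  by apply: (sO (s *: a1) (s *: a2)); [apply: H1 | apply: H2].
Qed.

Lemma pretvs_topE1 (E : lmodType K) (op : set (set E)) : is_pretvs op -> is_pretvs (topE1 abs op).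
Proof. by move=> hE; apply: pretvs_prod; [apply: pretvs_prod | apply: pretvs_field]. Qed.

End PreTVS.

Section Gauges.
Variables (R : realType) (K : fieldType) (abs : K -> R).
Hypothesis Habs : is_absval abs.

Lemma gauge_ge0 (E : lmodType K) (op : set (set E)) p x : is_gauge abs op p -> 0 <= p x.
Proof. by case=> ->. Qed.

Lemma gauge_max (E : lmodType K) (op : set (set E)) p q :
  (forall A B, op A -> op B -> op (A `&` B)) ->
  is_gauge abs op p -> is_gauge abs op q -> is_gauge abs op (fun x => Num.max (p x) (q x)).
Proof.
move=> hI [p0 pZ pN] [q0 qZ qN]; split.
- by move=> x; rewrite le_max p0.
- by move=> t x; rewrite pZ qZ maxr_pMr // abs_ge0.
- move=> r r0; have [U [oU U0] pU] := pN r r0; have [V [oV V0] qV] := qN r r0.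
  exists (U `&` V); first by split; [apply: hI |].
  by move=> x [Ux Vx]; rewrite /= gt_max (pU x Ux) (qV x Vx).
Qed.

Lemma gauge_scale (E : lmodType K) (op : set (set E)) p (c : R) :
  0 < c -> is_gauge abs op p -> is_gauge abs op (fun x => c * p x).
Proof.
move=> c0 [p0 pZ pN]; split.
- by move=> x; rewrite mulr_ge0 // ltW.
- by move=> t x; rewrite pZ mulrCA.
- move=> r r0; have [U [oU U0] pU] := pN (r / c) (divr_gt0 r0 c0).
  by exists U => // x /pU /=; rewrite ltr_pdivlMr // mulrC.
Qed.

Lemma gauge_comp_linear (E F : lmodType K) (opE : set (set E)) (opF : set (set F))
    (L : E -> F) q :
  scalable L -> continuous_on opE opF setT L ->
  is_gauge abs opF q -> is_gauge abs opE (q \o L).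
Proof.
move=> LZ cL [q0 qZ qN]; split.
- by move=> x; apply: q0.
- by move=> t x; rewrite /= LZ qZ.
- move=> r r0; have [O [oO O0] qO] := qN r r0.
  have L0 : O (L 0) by rewrite -(scale0r 0) LZ scale0r.
  have [U [oU U0] LU] := cL 0 I O oO L0.
  by exists U => // x Ux; apply/qO/LU.
Qed.

Section Minkowski.
Variables (E : lmodType K) (op : set (set E)) (A : set E).

Definition balanced_core : set E := [set x | forall u : K, abs u <= 1 -> A (u *: x)].

Definition minkowski (a : E) : R :=
  inf [set abs t | t in [set t : K | t != 0 /\ balanced_core (t^-1 *: a)]].

Hypotheses (hE : is_pretvs abs op) (oA : op A) (A0 : A 0) (Hnd : nondiscrete abs).

Lemma balanced_core_absorbing (a : E) :
  exists2 d : R, 0 < d & forall s, abs s < d -> balanced_core (s *: a).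
Proof.
case: hE => _ _ _ cZ.
have A0a : A ((0 : K^o, a).1 *: (0 : K^o, a).2) by rewrite /= scale0r.
have [T [N [oT oN T0 Na TN]]] := continuous2_rect cZ oA A0a.
have [d d0 Td] := oT 0 T0.
exists d => // s sd u u1; rewrite scalerA; apply: (TN (u * s) a) => //; apply: Td.
rewrite subr0 (absM Habs); have := abs_ge0 Habs s; have := abs_ge0 Habs u; nra.
Qed.

Lemma minkowski_le (a : E) (t : K) :
  t != 0 -> balanced_core (t^-1 *: a) -> minkowski a <= abs t.
Proof.
move=> t0 Bt; apply: ge_inf; last by exists t.
by exists 0 => _ [u _ <-]; apply: abs_ge0.
Qed.

Lemma minkowski_set_neq0 (a : E) :
  [set abs t | t in [set t : K | t != 0 /\ balanced_core (t^-1 *: a)]] !=set0.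
Proof.
have [d d0 Bd] := balanced_core_absorbing a.
have [s s0 sd] := exists_small_abs Hnd d0.
exists (abs s^-1), s^-1 => //.
by split; rewrite ?invr_eq0 ?invrK //; apply: Bd.
Qed.

Lemma minkowski_ge0 (a : E) : 0 <= minkowski a.
Proof. by apply: lb_le_inf; [apply: minkowski_set_neq0 | move=> _ [t _ <-]; apply: abs_ge0]. Qed.

Lemma minkowski_lt (a : E) (l : K) : l != 0 -> minkowski a < abs l -> A (l^-1 *: a).
Proof.
move=> l0 al; have [_ [t [t0 Bt] <-] tl] := inf_lt (minkowski_set_neq0 a) al.
have -> : l^-1 *: a = (l^-1 * t) *: (t^-1 *: a) by rewrite scalerA mulfK.
apply: Bt.
rewrite (absM Habs) (absV Habs) mulrC ler_pdivrMr ?mul1r ?abs_gt0 //; exact: ltW.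
Qed.

Lemma minkowskiZ_le (s : K) (a : E) : s != 0 -> minkowski (s *: a) <= abs s * minkowski a.
Proof.
move=> s0; have as0 := abs_gt0 Habs s0.
rewrite mulrC -ler_pdivrMr //; apply: lb_le_inf; first exact: minkowski_set_neq0.
move=> _ [t [t0 Bt] <-]; rewrite ler_pdivrMr // mulrC -(absM Habs).
by apply: minkowski_le; rewrite ?mulf_neq0 // invfM scalerA mulrAC mulVf ?mul1r.
Qed.

Lemma minkowski0 : minkowski 0 = 0.
Proof.
apply/eqP; rewrite eq_le minkowski_ge0 andbT leNgt; apply/negP => m0.
have [t t0 tm] := exists_small_abs Hnd m0.
have B0 : balanced_core (t^-1 *: 0) by move=> u _; rewrite !scaler0.
by have := minkowski_le t0 B0; rewrite leNgt tm.
Qed.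

Lemma minkowskiZ (s : K) (a : E) : minkowski (s *: a) = abs s * minkowski a.
Proof.
have [->|s0] := eqVneq s 0; first by rewrite scale0r minkowski0 abs0 ?mul0r.
apply/eqP; rewrite eq_le minkowskiZ_le //= mulrC -ler_pdivlMr ?abs_gt0 //.
have := @minkowskiZ_le s^-1 (s *: a); rewrite invr_eq0 scalerA mulVf // scale1r.
by rewrite (absV Habs) mulrC; apply.
Qed.

Lemma minkowski_small (r : R) : 0 < r ->
  exists2 U, op U /\ U 0 & U `<=` [set x | minkowski x < r].
Proof.
move=> r0; case: hE => _ _ _ cZ.
have A00 : A ((0 : K^o, 0 : E).1 *: (0 : K^o, 0 : E).2) by rewrite /= scale0r.
have [T [N [oT oN T0 N0 TN]]] := continuous2_rect cZ oA A00.
have [dT dT0 TdT] := oT 0 T0.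
have [d d0 ddT] := exists_small_abs Hnd dT0.
have [t t0 tr] := exists_small_abs Hnd r0.
(* [t^-1 *: x = d *: (c *: x)], with [d] in [T] and [c *: x] in [N] for [x] near 0. *)
pose c := (t * d)^-1.
have N0' : N ((c : K^o, 0 : E).1 *: (c : K^o, 0 : E).2) by rewrite /= scaler0.
have [T' [U [_ oU T'c U0 cUN]]] := continuous2_rect cZ oN N0'.
exists U => // x Ux; apply: le_lt_trans tr; apply: minkowski_le => // u u1.
have -> : u *: (t^-1 *: x) = (u * d) *: (c *: x).
  by rewrite !scalerA /c invfM mulrA [u * d * _]mulrAC mulfK.
apply: (TN (u * d) (c *: x)); last by apply: (cUN c x).
apply: TdT; rewrite subr0 (absM Habs).
have := abs_ge0 Habs u; have := abs_ge0 Habs d; nra.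
Qed.

Lemma is_gauge_minkowski : is_gauge abs op minkowski.
Proof. by split; [exact: minkowski_ge0 | exact: minkowskiZ | exact: minkowski_small]. Qed.

End Minkowski.

Lemma bernoulli_le (d : R) n : 0 <= d -> 1 + n%:R * d <= (1 + d) ^+ n.
Proof.
move=> d0; elim: n => [|n IH]; first by rewrite expr0 mul0r addr0.
rewrite exprS -addn1 natrD mulrDl mul1r.
have : 0 <= n%:R * d by rewrite mulr_ge0.
nra.
Qed.

Lemma exists_expr_lt (c e : R) : 0 < c -> c < 1 -> 0 < e -> exists n, c ^+ n < e.
Proof.
move=> c0 c1 e0; pose d := c^-1 - 1.
have d0 : 0 < d by rewrite subr_gt0 invf_gt1.
have ed0 : 0 < e * d by rewrite mulr_gt0.
set n := Num.bound (e * d)^-1; exists n.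
have ned : 1 < n%:R * (e * d).
  by rewrite -ltr_pdivrMr // div1r; apply: archi_boundP; rewrite invr_ge0 ltW.
have bern : 1 + n%:R * d <= (c ^+ n)^-1.
  by rewrite -exprVn [c^-1](_ : _ = 1 + d) ?bernoulli_le ?ltW // addrC subrK.
have cnV0 : 0 < (c ^+ n)^-1 by rewrite invr_gt0 exprn_gt0.
rewrite -(ltr_pM2r cnV0) mulfV ?expf_neq0 ?gt_eqF //.
have := ler0n R n; nra.
Qed.

Lemma abs_bracket (pi : K) (a b : R) : pi != 0 -> abs pi < 1 -> 0 <= a -> a < b * abs pi ->
  exists l : K, [/\ l != 0, a < abs l & abs l <= b].
Proof.
move=> pi0 pi1 a0 ab; set c := abs pi in pi1 ab.
have c0 : 0 < c by apply: abs_gt0.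
have b0 : 0 < b by rewrite -(pmulr_lgt0 _ c0); apply: le_lt_trans ab.
have bV0 : 0 < b^-1 by rewrite invr_gt0.
have [k ck] := exists_expr_lt c0 pi1 bV0.
have ck0 : 0 < c ^+ k by rewrite exprn_gt0.
have bck : b * c ^+ k < 1 by rewrite mulrC -ltr_pdivlMr // div1r.
(* [pi ^+ m / pi ^+ k] with [m] least such that [c ^+ m <= b * c ^+ k]. *)
have exm : exists m, c ^+ m <= b * c ^+ k.
  by have [m cm] := exists_expr_lt c0 pi1 (mulr_gt0 b0 ck0); exists m; apply: ltW.
case: (ex_minnP exm) => -[|m]; first by rewrite expr0 leNgt bck.
move=> cm m_min; have bcm : b * c ^+ k < c ^+ m.
  by rewrite ltNge; apply/negP => /m_min; rewrite ltnn.
exists (pi ^+ m.+1 / pi ^+ k); split.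
- by rewrite mulf_neq0 ?invr_eq0 ?expf_neq0.
- by rewrite (absM Habs) (absV Habs) !(absX Habs) -/c ltr_pdivlMr // exprS; nra.
- by rewrite (absM Habs) (absV Habs) !(absX Habs) -/c ler_pdivrMr.
Qed.

Lemma gauge_prod_le_max (E1 E2 : lmodType K) (op1 : set (set E1)) (op2 : set (set E2)) P :
  nondiscrete abs -> is_pretvs abs op1 -> is_pretvs abs op2 ->
  is_gauge abs (prod_open op1 op2 : set (set (E1 * E2)%type)) P ->
  exists q1 q2, [/\ is_gauge abs op1 q1, is_gauge abs op2 q2 &
    forall a b, P (a, b) <= Num.max (q1 a) (q2 b)].
Proof.
move=> Hnd h1 h2 [P0 PZ PN].
have [O [oO O0] PO] := PN 1 ltr01.
have [A1 [A2 [oA1 oA2 A10 A20 A12]]] := oO 0 O0.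
have [pi pi0 pi1] := exists_small_abs Hnd ltr01; set c := abs pi in pi1.
have c0 : 0 < c by apply: abs_gt0.
(* Rescaling by [c^-1] absorbs the factor [abs pi] lost in [abs_bracket]. *)
have cV0 : 0 < c^-1 by rewrite invr_gt0.
have g1 := is_gauge_minkowski h1 oA1 A10 Hnd; have g2 := is_gauge_minkowski h2 oA2 A20 Hnd.
exists (fun a => c^-1 * minkowski A1 a), (fun b => c^-1 * minkowski A2 b).
split; [exact: gauge_scale g1 | exact: gauge_scale g2 |].
move=> a b; rewrite -maxr_pMr; last exact: ltW.
set m := Num.max _ _.
have m0 : 0 <= m by rewrite le_max (gauge_ge0 _ g1).
rewrite mulrC -ler_pdivrMr ?invr_gt0 // invrK leNgt; apply/negP => mP.
have [l [l0 ml lP]] := abs_bracket pi0 pi1 m0 mP.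
have A1a : A1 (l^-1 *: a).
  by apply: (minkowski_lt h1) => //; apply: le_lt_trans ml; rewrite le_max lexx.
have A2b : A2 (l^-1 *: b).
  by apply: (minkowski_lt h2) => //; apply: le_lt_trans ml; rewrite le_max lexx orbT.
have := PO _ (A12 _ _ A1a A2b); rewrite -[(_, _)]/(l^-1 *: ((a, b) : E1 * E2)) /= PZ.
by rewrite (absV Habs) -ltr_pdivlMl ?invr_gt0 ?abs_gt0 // invrK mulr1 ltNge lP.
Qed.

End Gauges.

Section CkHolder.
Variables (R : realType) (K : fieldType) (abs : K -> R).
Hypothesis Habs : is_absval abs.

Lemma CkHolder_C0 s k (E F : lmodType K) (opE : set (set E)) (opF : set (set F)) W g :
  CkHolder abs s k opE opF W g -> continuous_on opE opF W g /\ C0holder abs s opE opF W g.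
Proof. by case: k => [|k] [] //. Qed.

Lemma CkHolder_succ s k : forall (E F : lmodType K) (opE : set (set E)) (opF : set (set F)) W g,
  CkHolder abs s k.+1 opE opF W g -> CkHolder abs s k opE opF W g.
Proof.
elim: k => [|k IH] E F opE opF W g /=; first by case.
by case=> cg Hg [g1 [cg1 eg1 Hg1]]; split => //; exists g1; split => //; apply: IH.
Qed.

Lemma continuous_topE1_base (E : lmodType K) (op : set (set E)) :
  is_pretvs abs op -> continuous_on (topE1 abs op) op setT (fun z : E * E * K^o => z.1.1).
Proof.
case=> oT _ _ _; have oTK := openK_setT abs.
exact: continuous_on_comp (continuous_fst oTK) (fun _ _ => I) (continuous_fst oT).
Qed.

Lemma continuous_topE1_dir (E : lmodType K) (op : set (set E)) :
  is_pretvs abs op -> continuous_on (topE1 abs op) op setT (fun z : E * E * K^o => z.1.2).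
Proof.
case=> oT _ _ _; have oTK := openK_setT abs.
exact: continuous_on_comp (continuous_fst oTK) (fun _ _ => I) (continuous_snd oT).
Qed.

Lemma continuous_topE1_scalar (E : lmodType K) (op : set (set E)) :
  is_pretvs abs op -> continuous_on (topE1 abs op) (openK abs) setT (fun z : E * E * K^o => z.2).
Proof. by case=> oT _ _ _; apply: continuous_snd; apply: prod_open_setT. Qed.

Lemma gauge_lt1_near (E : lmodType K) (op : set (set E)) p x0 :
  is_pretvs abs op -> is_gauge abs op p ->
  exists2 U, op U /\ U x0 & forall x y, U x -> U y -> p (y - x) < 1.
Proof.
case=> _ hI cD cZ [_ _ pN]; have [O [oO O0] pO] := pN 1 ltr01.
have O0' : O ((x0, - x0).1 + (x0, - x0).2) by rewrite /= subrr.
have [U [N [oU oN Ux0 Nx0 UN]]] := continuous2_rect cD oO O0'.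
have Nx0' : N (((-1 : K) : K^o, x0).1 *: ((-1 : K) : K^o, x0).2) by rewrite /= scaleN1r.
have [T [V [_ oV Tm1 Vx0 TV]]] := continuous2_rect cZ oN Nx0'.
exists (U `&` V); first by split => //; apply: hI.
move=> x y [_ Vx] [Uy _]; apply: pO; rewrite -scaleN1r.
exact: (UN y ((-1) *: x) Uy (TV (-1) x Tm1 Vx)).
Qed.

Lemma C0holder_exponentW s1 s2 (E F : lmodType K) (opE : set (set E)) (opF : set (set F)) W g :
  is_pretvs abs opE -> 0 < s2 -> s2 <= s1 ->
  C0holder abs s1 opE opF W g -> C0holder abs s2 opE opF W g.
Proof.
move=> hE s20 s21 Hg x0 Wx0 q gq.
have [p [gp [U [oU Ux0] gU]]] := Hg x0 Wx0 q gq.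
have [V [oV Vx0] pV] := gauge_lt1_near x0 hE gp.
exists p; split => //; exists (U `&` V); first by split => //; case: hE => _ hI _ _; apply: hI.
move=> x y Wx [Ux Vx] Wy [Uy Vy]; apply: le_trans (gU x y Wx Ux Wy Uy) _.
have [->|p0] := eqVneq (p (y - x)) 0; first by rewrite !powR0 ?gt_eqF // (lt_le_trans s20).
by apply: ger_powR s21; rewrite lt_neqAle eq_sym p0 (gauge_ge0 _ gp) /= ltW ?pV.
Qed.

Lemma CkHolder_exponentW s1 s2 (s20 : 0 < s2) (s21 : s2 <= s1) k :
  forall (E F : lmodType K) (opE : set (set E)) (opF : set (set F)) W g,
  is_pretvs abs opE -> CkHolder abs s1 k opE opF W g -> CkHolder abs s2 k opE opF W g.
Proof.
elim: k => [|k IH] E F opE opF W g hE /=.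
  by case=> cg Hg; split => //; apply: C0holder_exponentW Hg.
case=> cg Hg [g1 [cg1 eg1 Hg1]]; split => //; first exact: C0holder_exponentW Hg.
by exists g1; split => //; apply: IH => //; apply: pretvs_topE1.
Qed.

Lemma C0holder_linear (E F : lmodType K) (opE : set (set E)) (opF : set (set F)) (L : E -> F) W :
  opE setT -> {morph L : x y / x - y} -> scalable L ->
  continuous_on opE opF setT L -> C0holder abs 1 opE opF W L.
Proof.
move=> oT LB LZ cL x0 _ q gq; exists (q \o L); split; first exact: (gauge_comp_linear LZ cL gq).
exists setT => // x y _ _ _ _; rewrite powRr1 ?(gauge_ge0 _ gq) //=.
by rewrite LB.
Qed.

Lemma CkHolder_linear k : forall (E F : lmodType K) (opE : set (set E)) (opF : set (set F))
    (L : E -> F) W,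
  is_pretvs abs opE -> {morph L : x y / x - y} -> scalable L ->
  continuous_on opE opF setT L -> CkHolder abs 1 k opE opF W L.
Proof.
elim: k => [|k IH] E F opE opF L W hE LB LZ cL.
  by case: hE => oT _ _ _; split; [apply: continuous_on_sub | apply: C0holder_linear].
have [cLW HL] := CkHolder_C0 (IH E F opE opF L W hE LB LZ cL).
split => //.
have cL1 := continuous_on_comp (continuous_topE1_dir hE) (fun _ _ => I) cL.
exists (fun z => L z.1.2); split; first exact: continuous_on_sub.
- move=> [[x y] t] [_ /= t0].
  by rewrite /diffquot /= -LB addrAC subrr add0r LZ scalerA mulVf ?scale1r //; apply/eqP.
- by apply: IH => //; [exact: pretvs_topE1 | move=> ? ?; apply: LB | move=> ? ?; apply: LZ].
Qed.

Section Pair.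
Hypothesis Hnd : nondiscrete abs.
Variables (F1 F2 : lmodType K) (op1 : set (set F1)) (op2 : set (set F2)).
Hypotheses (h1 : is_pretvs abs op1) (h2 : is_pretvs abs op2).

Lemma C0holder_pair s (E : lmodType K) (opE : set (set E)) W g1 g2 : 0 <= s ->
  (forall X Y, opE X -> opE Y -> opE (X `&` Y)) ->
  C0holder abs s opE op1 W g1 -> C0holder abs s opE op2 W g2 ->
  C0holder abs s opE (prod_open op1 op2) W (fun x => (g1 x, g2 x)).
Proof.
move=> s0 hI Hg1 Hg2 x0 Wx0 P gP.
have [q1 [q2 [gq1 gq2 Pq]]] := gauge_prod_le_max Habs Hnd h1 h2 gP.
have [p1 [gp1 [U1 [oU1 U1x0] pU1]]] := Hg1 x0 Wx0 q1 gq1.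
have [p2 [gp2 [U2 [oU2 U2x0] pU2]]] := Hg2 x0 Wx0 q2 gq2.
exists (fun x => Num.max (p1 x) (p2 x)); split; first exact: gauge_max.
exists (U1 `&` U2); first by split => //; apply: hI.
move=> x y Wx [U1x U2x] Wy [U1y U2y]; apply: le_trans (Pq _ _) _.
rewrite ge_max; apply/andP; split.
- apply: le_trans (pU1 x y Wx U1x Wy U1y) _.
  by apply: ge0_ler_powR; rewrite ?nnegrE ?le_max ?lexx ?(gauge_ge0 _ gp1).
- apply: le_trans (pU2 x y Wx U2x Wy U2y) _.
  by apply: ge0_ler_powR; rewrite ?nnegrE ?le_max ?lexx ?(gauge_ge0 _ gp2) ?orbT.
Qed.

Lemma CkHolder_pair s (s0 : 0 <= s) k : forall (E : lmodType K) (opE : set (set E)) W g1 g2,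
  is_pretvs abs opE -> CkHolder abs s k opE op1 W g1 -> CkHolder abs s k opE op2 W g2 ->
  CkHolder abs s k opE (prod_open op1 op2) W (fun x => (g1 x, g2 x)).
Proof.
elim: k => [|k IH] E opE W g1 g2 hE /=; have [_ hI _ _] := hE.
  by case=> c1 H1 [c2 H2]; split; [apply: continuous_on_pair | apply: C0holder_pair].
case=> c1 H1 [d1 [cd1 ed1 Hd1]] [c2 H2 [d2 [cd2 ed2 Hd2]]].
split; [exact: continuous_on_pair | exact: C0holder_pair |].
have [_ hI1 _ _] := pretvs_topE1 Habs hE.
exists (fun z => (d1 z, d2 z)); split; first exact: continuous_on_pair.
- by move=> z Wz; rewrite ed1 // ed2.
- by apply: IH => //; apply: pretvs_topE1.
Qed.

End Pair.

Lemma C0holder_comp s t (E F H : lmodType K) (opE : set (set E)) (opF : set (set F))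
    (opH : set (set H)) U V f g :
  (forall X Y, opE X -> opE Y -> opE (X `&` Y)) -> 0 <= t ->
  (forall x, U x -> V (f x)) -> continuous_on opE opF U f ->
  C0holder abs s opE opF U f -> C0holder abs t opF opH V g ->
  C0holder abs (s * t) opE opH U (g \o f).
Proof.
move=> hI t0 fUV cf Hf Hg x0 Ux0 q gq.
have [p [gp [UF [oUF UFx0] qUF]]] := Hg (f x0) (fUV x0 Ux0) q gq.
have [p' [gp' [UE [oUE UEx0] pUE]]] := Hf x0 Ux0 p gp.
have [UE' [oUE' UE'x0] fUE'] := cf x0 Ux0 UF oUF UFx0.
exists p'; split => //; exists (UE `&` UE'); first by split => //; apply: hI.
move=> x y Ux [UEx UE'x] Uy [UEy UE'y] /=.
apply: le_trans (qUF _ _ (fUV x Ux) (fUE' x Ux UE'x) (fUV y Uy) (fUE' y Uy UE'y)) _.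
rewrite powRrM; apply: ge0_ler_powR; rewrite ?nnegrE ?powR_ge0 ?(gauge_ge0 _ gp) //.
exact: pUE.
Qed.

End CkHolder.

Section Composition.
Variables (R : realType) (K : fieldType) (abs : K -> R).
Hypotheses (Habs : is_absval abs) (Hnd : nondiscrete abs).

Lemma diffquotK (E F : lmodType K) (f : E -> F) x y (t : K^o) :
  t != 0 -> f x + t *: diffquot f ((x, y), t) = f (x + t *: y).
Proof. by move=> t0; rewrite /diffquot scalerA mulfV // scale1r addrC subrK. Qed.

Section ChainRule.
Variables (E F H : lmodType K) (U : set E) (V : set F) (f : E -> F) (g : F -> H).
Variable f1 : E * E * K^o -> F.
Hypotheses (fUV : forall x, U x -> V (f x))
  (ef1 : forall z, W1open U z -> f1 z = diffquot f z).

(* [(g \o f)^{[1]} = g^{[1]} \o chain_map] on [W1open U]: the chain rule. *)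
Definition chain_map (z : E * E * K^o) : F * F * K^o := ((f z.1.1, f1 z), z.2).

Lemma chain_map_W1 z : W1 U z -> W1 V (chain_map z).
Proof.
case: z => [[x y] t] [/= Ux Uxy]; rewrite /chain_map; split => /=; first exact: fUV.
have [->|t0] := eqVneq t 0; first by rewrite scale0r addr0; apply: fUV.
by rewrite ef1 ?diffquotK //; [apply: fUV | split => //; apply/eqP].
Qed.

Lemma diffquot_comp z : W1open U z -> diffquot (g \o f) z = diffquot g (chain_map z).
Proof.
case: z => [[x y] t] [Wz /eqP t0].
rewrite /chain_map ef1; last by split => //; apply/eqP.
by rewrite [in RHS]/diffquot /= diffquotK.
Qed.

End ChainRule.

Lemma CkHolder_comp k : forall (E F H : lmodType K) (opE : set (set E)) (opF : set (set F))
    (opH : set (set H)) U V f g s t,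
  is_pretvs abs opE -> is_pretvs abs opF -> 0 < s <= 1 -> 0 < t ->
  (forall x, U x -> V (f x)) ->
  CkHolder abs s k opE opF U f -> CkHolder abs t k opF opH V g ->
  CkHolder abs (s * t) k opE opH U (g \o f).
Proof.
elim: k => [|k IH] E F H opE opF opH U V f g s t hE hF /andP[s0 s1] t0 fUV.
  case=> cf Hf [cg Hg]; split; first exact: continuous_on_comp cf fUV cg.
  by case: hE => _ hI _ _; apply: C0holder_comp Hf Hg => //; apply: ltW.
move=> Hf0 Hg0; have Hf_k := CkHolder_succ Hf0.
case: Hf0 => cf Hf [f1 [cf1 ef1 Hf1]]; case: Hg0 => cg Hg [g1 [cg1 eg1 Hg1]].
have hE1 := pretvs_topE1 Habs hE; have hF1 := pretvs_topE1 Habs hF.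
have [_ hI _ _] := hE.
split; first exact: continuous_on_comp cf fUV cg.
  exact: C0holder_comp hI (ltW t0) fUV cf Hf Hg.
have base_Ck : CkHolder abs 1 k (topE1 abs opE) opE (W1 U) (fun z : E * E * K^o => z.1.1).
  by apply: (CkHolder_linear Habs) => //; apply: continuous_topE1_base.
have scalar_Ck : CkHolder abs s k (topE1 abs opE) (openK abs) (W1 U) (fun z : E * E * K^o => z.2).
  apply: (CkHolder_exponentW Habs s0 s1 hE1).
  by apply: (CkHolder_linear Habs) => //; apply: continuous_topE1_scalar.
have f_base_Ck : CkHolder abs s k (topE1 abs opE) opF (W1 U) (f \o (fun z : E * E * K^o => z.1.1)).
  rewrite -[s]mul1r; apply: IH base_Ck Hf_k => //; first by rewrite ltr01 lexx.
  by move=> z [].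
have chain_Ck : CkHolder abs s k (topE1 abs opE) (topE1 abs opF) (W1 U) (chain_map f f1).
  apply: (CkHolder_pair Habs Hnd _ (pretvs_field Habs) (ltW s0) hE1 _ scalar_Ck).
    exact: pretvs_prod.
  exact: (CkHolder_pair Habs Hnd hF hF (ltW s0) hE1 f_base_Ck Hf1).
have comp_Ck : CkHolder abs (s * t) k (topE1 abs opE) opH (W1 U) (g1 \o chain_map f f1).
  by apply: IH chain_Ck Hg1 => //; [rewrite s0 | exact: chain_map_W1].
exists (g1 \o chain_map f f1); split; last exact: comp_Ck.
- by case: (CkHolder_C0 comp_Ck).
- move=> z Wz; rewrite (diffquot_comp g ef1 Wz) /= eg1 //.
  by case: Wz => Wz z0; split; first exact: chain_map_W1 fUV ef1 _ Wz.
Qed.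

End Composition.

Theorem lemma1p33 (R : realType) (K : fieldType) (abs : K -> R)
  (Habs : is_absval abs) (Hnd : nondiscrete abs)
  (E F H : lmodType K)
  (opE : set (set E)) (opF : set (set F)) (opH : set (set H))
  (HE : is_tvs abs opE) (HF : is_tvs abs opF) (HH : is_tvs abs opH)
  (U : set E) (V : set F)
  (HU : dense_interior opE U) (HV : dense_interior opF V)
  (k : nat) (sigma tau : R) (Hsigma : 0 < sigma <= 1) (Htau : 0 < tau)
  (f : E -> F) (g : F -> H)
  (HfUV : forall x, U x -> V (f x))
  (Hf : CkHolder abs sigma k opE opF U f)
  (Hg : CkHolder abs tau k opF opH V g) :
  CkHolder abs (sigma * tau) k opE opH U (g \o f).
Proof.
have hE := is_tvs_pretvs HE; have hF := is_tvs_pretvs HF.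
exact (CkHolder_comp Habs Hnd hE hF Hsigma Htau HfUV Hf Hg).
Qed.
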